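(* Let $\mathcal{C}$ be either $\mathbf{Sets}$ or $\mathbf{Vec}$ and let $M,N:\mathbf{R}^d\to\mathcal{C}$ be surjective persistence modules. Then (i) $d_{\mathrm{I},d}(\mathrm{dm}(M),\mathrm{dm}(N))\le 2\cdot d_{\mathrm{I},d}^{\mathcal{C}}(M,N)$, and (ii) $d_{\mathrm{I},d}(\mathrm{dm}(M),\mathrm{dm}(N))\le\mathbf{d}_{\mathrm{I},d}^{\mathcal{C}}(M,N)$.
   Context: $\mathbf{R}^d$ has the product order and $\vec\varepsilon=\varepsilon(1,\dots,1)$. A persistence module $M:\mathbf{R}^d\to\mathcal{C}$ is a functor: objects $M_\mathbf{a}$ and morphisms $\varphi_M(\mathbf{a},\mathbf{b}):M_\mathbf{a}\to M_\mathbf{b}$ for $\mathbf{a}\le\mathbf{b}$. It is surjective if every $\varphi_M(\mathbf{a},\mathbf{b})$ is surjective. The dimension function $\mathrm{dm}(M):\mathbf{R}^d\to\mathbf{Z}_+$ sends $\mathbf{a}$ to the cardinality (for $\mathbf{Sets}$) or dimension (for $\mathbf{Vec}$) of $M_\mathbf{a}$ (modules are assumed pointwise finite so this is a nonnegative integer). An $\varepsilon$-interleaving between $M,N$ consists of natural families $f_\mathbf{a}:M_\mathbf{a}\to N_{\mathbf{a}+\vec\varepsilon}$, $g_\mathbf{a}:N_\mathbf{a}\to M_{\mathbf{a}+\vec\varepsilon}$ with $g_{\mathbf{a}+\vec\varepsilon}\circ f_\mathbf{a}=\varphi_M(\mathbf{a},\mathbf{a}+2\vec\varepsilon)$ and $f_{\mathbf{a}+\vec\varepsilon}\circ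 g_\mathbf{a}=\varphi_N(\mathbf{a},\mathbf{a}+2\vec\varepsilon)$; $d_{\mathrm{I},d}^{\mathcal{C}}(M,N)$ is the infimum of $\varepsilon$ admitting one, and $\mathbf{d}_{\mathrm{I},d}^{\mathcal{C}}(M,N)$ the infimum of $\varepsilon$ admitting one with all $f_\mathbf{a},g_\mathbf{a}$ surjective ($\infty$ if none). For functions $F,G:\mathbf{R}^d\to\mathbf{Z}_+$, $d_{\mathrm{I},d}(F,G):=\inf\{\varepsilon\ge0:\forall\mathbf{a},\ F(\mathbf{a})\ge G(\mathbf{a}+\vec\varepsilon),\ G(\mathbf{a})\ge F(\mathbf{a}+\vec\varepsilon)\}$. *)

From HB Require Import structures.
From mathcomp Require Import all_boot all_order all_algebra.
From mathcomp Require Import boolp classical_sets reals constructive_ereal ereal.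
Set Implicit Arguments. Unset Strict Implicit. Unset Printing Implicit Defensive.
Import Order.TTheory GRing.Theory Num.Theory.
Local Open Scope ring_scope.
Local Open Scope classical_set_scope.

Definition pleq (R : realType) (d : nat) (a b : 'I_d -> R) : bool :=
  [forall i, a i <= b i].

Definition shift (R : realType) (d : nat) (a : 'I_d -> R) (e : R) : 'I_d -> R :=
  fun i => a i + e.

Definition surj (A B : Type) (f : A -> B) : Prop := forall y, exists x, f x = y.

Record setPM (R : realType) (d : nat) := SetPM {
  spm_obj : ('I_d -> R) -> finType;
  spm_map : forall a b, pleq a b -> spm_obj a -> spm_obj b;
  spm_id : forall a (h : pleq a a) x, spm_map h x = x;
  spm_comp : forall a b c (hab : pleq a b) (hbc : pleq b c) (hac : pleq a c) x,
      spm_map hac x = spm_map hbc (spm_map hab x) }.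
Arguments spm_obj {R d} s _.
Arguments spm_map {R d} s {a b} _ _.

Record vecPM (K : fieldType) (R : realType) (d : nat) := VecPM {
  vpm_obj : ('I_d -> R) -> vectType K;
  vpm_map : forall a b, pleq a b -> {linear vpm_obj a -> vpm_obj b};
  vpm_id : forall a (h : pleq a a) x, vpm_map h x = x;
  vpm_comp : forall a b c (hab : pleq a b) (hbc : pleq b c) (hac : pleq a c) x,
      vpm_map hac x = vpm_map hbc (vpm_map hab x) }.
Arguments vpm_obj {K R d} v _.
Arguments vpm_map {K R d} v {a b} _.

Definition set_surjective R d (M : setPM R d) : Prop :=
  forall a b (h : pleq a b), surj (spm_map M h).
Definition vec_surjective K R d (M : vecPM K R d) : Prop :=
  forall a b (h : pleq a b), surj (vpm_map M h).

Definition set_dm R d (M : setPM R d) : ('I_d -> R) -> nat :=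
  fun a => #|spm_obj M a|.
Definition vec_dm K R d (M : vecPM K R d) : ('I_d -> R) -> nat :=
  fun a => \dim (fullv : {vspace vpm_obj M a}).

Definition dI_fun (R : realType) d (F G : ('I_d -> R) -> nat) : \bar R :=
  ereal_inf [set e%:E | e in [set e : R | 0 <= e /\
     forall a, (G (shift a e) <= F a)%N /\ (F (shift a e) <= G a)%N]].

Definition set_interleaving R d (M N : setPM R d) (e : R)
  (f : forall a, spm_obj M a -> spm_obj N (shift a e))
  (g : forall a, spm_obj N a -> spm_obj M (shift a e)) : Prop :=
  [/\ (forall a b (hab : pleq a b) (hab' : pleq (shift a e) (shift b e)) x,
         f b (spm_map M hab x) = spm_map N hab' (f a x)),
      (forall a b (hab : pleq a b) (hab' : pleq (shift a e) (shift b e)) x,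
         g b (spm_map N hab x) = spm_map M hab' (g a x)),
      (forall a (h : pleq a (shift (shift a e) e)) x,
         g (shift a e) (f a x) = spm_map M h x) &
      (forall a (h : pleq a (shift (shift a e) e)) x,
         f (shift a e) (g a x) = spm_map N h x)].

Definition vec_interleaving K R d (M N : vecPM K R d) (e : R)
  (f : forall a, {linear vpm_obj M a -> vpm_obj N (shift a e)})
  (g : forall a, {linear vpm_obj N a -> vpm_obj M (shift a e)}) : Prop :=
  [/\ (forall a b (hab : pleq a b) (hab' : pleq (shift a e) (shift b e)) x,
         f b (vpm_map M hab x) = vpm_map N hab' (f a x)),
      (forall a b (hab : pleq a b) (hab' : pleq (shift a e) (shift b e)) x,
         g b (vpm_map N hab x) = vpm_map M hab' (g a x)),
      (forall a (h : pleq a (shift (shift a e) e)) x,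
         g (shift a e) (f a x) = vpm_map M h x) &
      (forall a (h : pleq a (shift (shift a e) e)) x,
         f (shift a e) (g a x) = vpm_map N h x)].

(* d_{I,d}^Sets and bold d_{I,d}^Sets (surjective interleavings); +oo if none *)
Definition set_dI (R : realType) d (M N : setPM R d) : \bar R :=
  ereal_inf [set e%:E | e in [set e : R | 0 <= e /\
     exists f g, @set_interleaving R d M N e f g]].
Definition set_dI_surj (R : realType) d (M N : setPM R d) : \bar R :=
  ereal_inf [set e%:E | e in [set e : R | 0 <= e /\
     exists f g, @set_interleaving R d M N e f g /\
       (forall a, surj (f a)) /\ (forall a, surj (g a))]].

Definition vec_dI K (R : realType) d (M N : vecPM K R d) : \bar R :=
  ereal_inf [set e%:E | e in [set e : R | 0 <= e /\
     exists f g, @vec_interleaving K R d M N e f g]].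
Definition vec_dI_surj K (R : realType) d (M N : vecPM K R d) : \bar R :=
  ereal_inf [set e%:E | e in [set e : R | 0 <= e /\
     exists f g, @vec_interleaving K R d M N e f g /\
       (forall a, surj (f a)) /\ (forall a, surj (g a))]].

From HB Require Import structures.
From mathcomp Require Import all_boot all_order all_algebra.
From mathcomp Require Import boolp classical_sets reals constructive_ereal ereal.
Import Order.TTheory GRing.Theory Num.Theory.
Local Open Scope ring_scope.
Local Open Scope ereal_scope.

(* Surjective structure maps can only decrease sizes, so dm(M) and dm(N) are
   nonincreasing.  If f, g form an e-interleaving, then f_(a+e) o g_a is the
   surjective map N_a -> N_(a+2e), hence f_(a+e) is surjective and
   dm N (a+2e) <= dm M (a+e) <= dm M a: the dimension functions are
   2e-interleaved.  If f and g are themselves surjective, the inequality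
   dm N (a+e) <= dm M a is immediate, and the functions are e-interleaved. *)

Lemma surj_compr (A B C : Type) (f : B -> C) (g : A -> B) :
  surj (f \o g) -> surj f.
Proof. by move=> sfg z; have [x <-] := sfg z; exists (g x). Qed.

Lemma leq_card_surj (A B : finType) (f : A -> B) : surj f -> (#|B| <= #|A|)%N.
Proof.
move=> sf; have sf' y : exists x, f x == y by have [x <-] := sf y; exists x.
have gK : cancel (fun y => xchoose (sf' y)) f by move=> y; apply/eqP/(xchooseP (sf' y)).
exact: leq_card (can_inj gK).
Qed.

Lemma leq_dimv_surj (K : fieldType) (V W : vectType K) (f : {linear V -> W}) :
  surj f -> (\dim (fullv : {vspace W}) <= \dim (fullv : {vspace V}))%N.
Proof.
move=> sf; have fullv_img : (fullv <= linfun f @: fullv)%VS.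
  by apply/subvP => w _; have [v <-] := sf w; rewrite -lfunE memv_img ?memvf.
apply: leq_trans (dimvS fullv_img) _.
by rewrite -(limg_ker_dim (linfun f) fullv) leq_addl.
Qed.

Section Shift.
Variables (R : realType) (d : nat).
Implicit Types (a : 'I_d -> R) (e : R).

Lemma pleq_shift a {e} : (0 <= e)%R -> pleq a (shift a e).
Proof. by move=> e0; apply/forallP => i; rewrite /shift lerDl. Qed.

Lemma shift_mul2 a e : shift a (2 * e) = shift (shift a e) e.
Proof. by apply/funext => i; rewrite /shift mulr2n mulrDl mul1r addrA. Qed.

Lemma pleq_shift_shift a {e} : (0 <= e)%R -> pleq a (shift (shift a e) e).
Proof. by move=> e0; rewrite -shift_mul2 pleq_shift ?mulr_ge0. Qed.

Definition dm_interleaved (F G : ('I_d -> R) -> nat) e :=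
  forall a, (G (shift a e) <= F a)%N /\ (F (shift a e) <= G a)%N.

Lemma dI_fun_le_scale (F G : ('I_d -> R) -> nat) (P : R -> Prop) (c : R) :
  (0 < c)%R -> (forall e, (0 <= e)%R -> P e -> dm_interleaved F G (c * e)) ->
  dI_fun F G <= c%:E * ereal_inf [set e%:E | e in [set e : R | (0 <= e)%R /\ P e]].
Proof.
move=> c0 FG; rewrite -ereal_inf_pZl //; apply: ereal_inf_le_tmp.
move=> _ [_ [e [e0 Pe] <-] <-]; exists (c * e)%R; last by rewrite EFinM.
by split; [exact: mulr_ge0 (ltW c0) e0 | exact: FG].
Qed.

Lemma dI_fun_le (F G : ('I_d -> R) -> nat) (P : R -> Prop) :
  (forall e, (0 <= e)%R -> P e -> dm_interleaved F G e) ->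
  dI_fun F G <= ereal_inf [set e%:E | e in [set e : R | (0 <= e)%R /\ P e]].
Proof.
move=> FG; rewrite -[X in _ <= X]mul1e.
by apply: dI_fun_le_scale => // e e0 Pe; rewrite mul1r; exact: FG.
Qed.

Lemma dm_interleaved_mul2 (F G : ('I_d -> R) -> nat) e : (0 <= e)%R ->
  (forall a b, pleq a b -> F b <= F a)%N ->
  (forall a b, pleq a b -> G b <= G a)%N ->
  (forall a, G (shift (shift a e) e) <= F (shift a e))%N ->
  (forall a, F (shift (shift a e) e) <= G (shift a e))%N ->
  dm_interleaved F G (2 * e).
Proof.
move=> e0 decF decG GF FG a; rewrite shift_mul2; split.
- exact: leq_trans (GF a) (decF _ _ (pleq_shift a e0)).
- exact: leq_trans (FG a) (decG _ _ (pleq_shift a e0)).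
Qed.

End Shift.

Arguments pleq_shift {R d} a {e}.
Arguments pleq_shift_shift {R d} a {e}.
Arguments dm_interleaved {R d}.

Section SetModules.
Variables (R : realType) (d : nat).
Implicit Types (M N : setPM R d) (e : R).

Lemma set_dm_nonincreasing M a b :
  set_surjective M -> pleq a b -> (set_dm M b <= set_dm M a)%N.
Proof. by move=> sM ab; exact: leq_card_surj (sM _ _ ab). Qed.

Lemma set_interleaving_sym {M N e f g} :
  @set_interleaving R d M N e f g -> @set_interleaving R d N M e g f.
Proof. by case. Qed.

Lemma set_dm_interleaving_le {M N e f g} a : (0 <= e)%R -> set_surjective N ->
  @set_interleaving R d M N e f g ->
  (set_dm N (shift (shift a e) e) <= set_dm M (shift a e))%N.
Proof.
move=> e0 sN [_ _ _ fg]; apply: (@leq_card_surj _ _ (f (shift a e))).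
apply: (@surj_compr _ _ _ _ (g a)) => y.
have [x <-] := sN _ _ (pleq_shift_shift a e0) y.
by exists x; exact: fg.
Qed.

Lemma set_dm_interleaved M N e f g : (0 <= e)%R ->
  set_surjective M -> set_surjective N -> @set_interleaving R d M N e f g ->
  dm_interleaved (set_dm M) (set_dm N) (2 * e).
Proof.
move=> e0 sM sN MN; apply: dm_interleaved_mul2 => // [a b|a b|a|a].
- exact: set_dm_nonincreasing.
- exact: set_dm_nonincreasing.
- exact: set_dm_interleaving_le a e0 sN MN.
- exact: set_dm_interleaving_le a e0 sM (set_interleaving_sym MN).
Qed.

Lemma set_dm_interleaved_surj M N e
    (f : forall a, spm_obj M a -> spm_obj N (shift a e))
    (g : forall a, spm_obj N a -> spm_obj M (shift a e)) :
  (forall a, surj (f a)) -> (forall a, surj (g a)) ->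
  dm_interleaved (set_dm M) (set_dm N) e.
Proof. by move=> sf sg a; split; apply: leq_card_surj. Qed.

End SetModules.

Section VecModules.
Variables (K : fieldType) (R : realType) (d : nat).
Implicit Types (M N : vecPM K R d) (e : R).

Lemma vec_dm_nonincreasing M a b :
  vec_surjective M -> pleq a b -> (vec_dm M b <= vec_dm M a)%N.
Proof. by move=> sM ab; exact: leq_dimv_surj (sM _ _ ab). Qed.

Lemma vec_interleaving_sym {M N e f g} :
  @vec_interleaving K R d M N e f g -> @vec_interleaving K R d N M e g f.
Proof. by case. Qed.

Lemma vec_dm_interleaving_le {M N e f g} a : (0 <= e)%R -> vec_surjective N ->
  @vec_interleaving K R d M N e f g ->
  (vec_dm N (shift (shift a e) e) <= vec_dm M (shift a e))%N.
Proof.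
move=> e0 sN [_ _ _ fg]; apply: (@leq_dimv_surj _ _ _ (f (shift a e))).
apply: (@surj_compr _ _ _ _ (g a)) => y.
have [x <-] := sN _ _ (pleq_shift_shift a e0) y.
by exists x; exact: fg.
Qed.

Lemma vec_dm_interleaved M N e f g : (0 <= e)%R ->
  vec_surjective M -> vec_surjective N -> @vec_interleaving K R d M N e f g ->
  dm_interleaved (vec_dm M) (vec_dm N) (2 * e).
Proof.
move=> e0 sM sN MN; apply: dm_interleaved_mul2 => // [a b|a b|a|a].
- exact: vec_dm_nonincreasing.
- exact: vec_dm_nonincreasing.
- exact: vec_dm_interleaving_le a e0 sN MN.
- exact: vec_dm_interleaving_le a e0 sM (vec_interleaving_sym MN).
Qed.

Lemma vec_dm_interleaved_surj M N e
    (f : forall a, {linear vpm_obj M a -> vpm_obj N (shift a e)})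
    (g : forall a, {linear vpm_obj N a -> vpm_obj M (shift a e)}) :
  (forall a, surj (f a)) -> (forall a, surj (g a)) ->
  dm_interleaved (vec_dm M) (vec_dm N) e.
Proof. by move=> sf sg a; split; apply: leq_dimv_surj. Qed.

End VecModules.

Theorem proposition6p9 (R : realType) (d : nat) :
  (forall M N : setPM R d, set_surjective M -> set_surjective N ->
     dI_fun (set_dm M) (set_dm N) <= 2%:E * set_dI M N /\
     dI_fun (set_dm M) (set_dm N) <= set_dI_surj M N) /\
  (forall (K : fieldType) (M N : vecPM K R d), vec_surjective M -> vec_surjective N ->
     dI_fun (vec_dm M) (vec_dm N) <= 2%:E * vec_dI M N /\
     dI_fun (vec_dm M) (vec_dm N) <= vec_dI_surj M N).
Proof.
split=> [M N sM sN | K M N sM sN]; split.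
- apply: dI_fun_le_scale => // e e0 [f [g MN]].
  exact: set_dm_interleaved MN.
- apply: dI_fun_le => e _ [f [g [_ [sf sg]]]].
  exact: set_dm_interleaved_surj sf sg.
- apply: dI_fun_le_scale => // e e0 [f [g MN]].
  exact: vec_dm_interleaved MN.
- apply: dI_fun_le => e _ [f [g [_ [sf sg]]]].
  exact: vec_dm_interleaved_surj sf sg.
Qed.
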